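(* Let $p(y),q(y)\in\mathbb{C}[y]$ be coprime polynomials such that $p/q$ is nonconstant and $\deg q\le\deg p$. Let $x_1,\dots,x_n$ be distinct points of the Riemann sphere with homogeneous coordinates $[\alpha_i:\beta_i]$ ($x_i=\alpha_i/\beta_i$), and suppose that for each $i$ there is a polynomial $\tilde p_i(y)$ with $$\beta_i\,p(y)-\alpha_i\,q(y)=\tilde p_i(y)^2.$$ Then: (1) if $n=1$ and $x_1=0$, then $x=p/q=P^2/q$ for some polynomial $P$; (2) if $n=2$ and $\{x_1,x_2\}=\{0,\infty\}$, then $x=p/q=P^2/Q^2$ for some polynomials $P,Q$; (3) if $n=3$ and $\{x_1,x_2,x_3\}=\{0,\infty,1\}$, then $x=p/q=\left(\frac{P^2+Q^2}{2PQ}\right)^2$ for some polynomials $P,Q$; (4) if $n\ge 4$, no such $p,q$ exist.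
   Context: The condition expresses that the change of variable $x=p(y)/q(y)$ has every preimage of each point $x_i$ of even multiplicity (used to make half-integer eigenvalues of matrix residues at the points $x_i$ integer after the change of variable). *)

From HB Require Import structures.
From mathcomp Require Import all_boot all_order all_algebra.
Set Implicit Arguments. Unset Strict Implicit. Unset Printing Implicit Defensive.
Import Order.TTheory GRing.Theory Num.Theory.
Local Open Scope ring_scope.

Definition ratf (C : idomainType) (p q : {poly C}) : {fraction {poly C}} :=
  FracField.tofrac p / FracField.tofrac q.

Definition polyF (C : idomainType) (p : {poly C}) : {fraction {poly C}} :=
  FracField.tofrac p.

(* Points of the Riemann sphere P^1(C) in homogeneous coordinates [a : b]
   (meaning x = a/b); two nonzero pairs denote the same point iff
   a * d = b * c. *)
Definition proj_eq (C : ringType) (x y : C * C) : bool := x.1 * y.2 == x.2 * y.1.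

Definition pt0 (C : ringType) : C * C := (0, 1).
Definition ptInf (C : ringType) : C * C := (1, 0).
Definition pt1 (C : ringType) : C * C := (1, 1).

Definition pts_set_eq (C : ringType) (n : nat) (a b : 'I_n -> C) (S : seq (C * C)) : Prop :=
  (forall i, exists2 s, s \in S & proj_eq (a i, b i) s) /\
  (forall s, s \in S -> exists i, proj_eq (a i, b i) s).

From HB Require Import structures.
From mathcomp Require Import all_boot all_order all_algebra.
From mathcomp Require Import ring zify.
Import GRing.Theory Num.Theory.
Set Implicit Arguments. Unset Strict Implicit. Unset Printing Implicit Defensive.
Local Open Scope ring_scope.

(* For x = [a : b] let f_x := b p - a q, whose zeros are the preimages of x
   under p/q, and let W := p q' - p' q.  The Wronskian of f_x and f_y is a
   nonzero multiple of W when x <> y, and W <> 0 since p/q is nonconstant.  If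
   f_x = g^2 then g divides W(f_x, f_y), hence W, and the g's of distinct points
   are coprime because p and q are.  Four of them would give
   deg W >= deg g_1 + ... + deg g_4, whereas for every pair
   deg W <= deg f_x + deg f_y - 2 < 2 (deg g_x + deg g_y).
   The fibres of 0, infinity and 1 are p, -q and p - q.  When all three are
   squares, p = P^2, q = Q^2, p - q = R^2, the coprime factors of
   (P - R)(P + R) = Q^2 are squares U^2 and V^2, so that
   p/q = (P/(UV))^2 = ((U^2 + V^2)/(2UV))^2. *)

Definition wronskian (R : nzRingType) (p q : {poly R}) : {poly R} :=
  p * q^`() - p^`() * q.

Definition fibre_poly (R : nzRingType) (p q : {poly R}) (x : R * R) : {poly R} :=
  x.2%:P * p - x.1%:P * q.

Lemma wronskian_fibre_poly (R : comNzRingType) (p q : {poly R}) (x y : R * R) :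
  wronskian (fibre_poly p q x) (fibre_poly p q y)
  = (x.1 * y.2 - x.2 * y.1)%:P * wronskian p q.
Proof.
by rewrite /wronskian /fibre_poly !derivB !derivM !derivC polyCB !polyCM; ring.
Qed.

Lemma dvdp_wronskian_sqr (R : idomainType) (g h : {poly R}) :
  g %| wronskian (g ^+ 2) h.
Proof.
have -> : wronskian (g ^+ 2) h = g * (g * h^`() - (g^`() + g^`()) * h).
  by rewrite /wronskian expr2 derivM; ring.
exact: dvdp_mulr (dvdpp g).
Qed.

Lemma size_wronskian (R : idomainType) (f g : {poly R}) :
  f != 0 -> g != 0 -> (size (wronskian f g) + 2 <= size f + size g)%N.
Proof.
move=> f0 g0; have := lt_size_deriv f0; have := lt_size_deriv g0.
rewrite -!size_poly_gt0 in f0 g0 => dg df.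
have dA := size_polyMleq f g^`(); have dB := size_polyMleq f^`() g.
have dW : (size (wronskian f g) <= maxn (size (f * g^`())%R) (size (f^`() * g)%R))%N.
  by rewrite -(size_polyN (f^`() * g)) size_polyD.
apply: leq_trans (leq_add dW (leqnn 2)) _.
by rewrite addn_maxl geq_max; apply/andP; split; lia.
Qed.

Lemma deriv_eq0_const (R : numDomainType) (p : {poly R}) :
  p^`() = 0 -> p = (p`_0)%:P.
Proof.
move=> dp0; apply/polyP=> -[|i]; rewrite coefC //=.
have /eqP := congr1 (fun r : {poly R} => r`_i) dp0.
by rewrite coef_deriv coef0 mulrn_eq0 => /eqP.
Qed.

Lemma wronskian_coprime_eq0 (R : idomainType) (p q : {poly R}) :
  coprimep p q -> wronskian p q = 0 -> p^`() = 0 /\ q^`() = 0.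
Proof.
move=> cpq /eqP; rewrite subr_eq0 => /eqP W0.
have dvdp_deriv0 (f : {poly R}) : f %| f^`() -> f^`() = 0.
  apply: contraTeq => df0; have f0 : f != 0 by apply: contra_neq df0 => ->; exact: deriv0.
  by apply/negP => /(dvdp_leq df0); rewrite leqNgt lt_size_deriv.
split; apply: dvdp_deriv0.
  by rewrite -(Gauss_dvdpl _ cpq) -W0 dvdp_mulr.
by rewrite -(Gauss_dvdpr _ (q := p)) 1?coprimep_sym // W0 dvdp_mull.
Qed.

Lemma wronskian_neq0 (R : numFieldType) (p q : {poly R}) :
  coprimep p q -> q != 0 -> ~ (exists c : R, ratf p q = polyF c%:P) ->
  wronskian p q != 0.
Proof.
move=> cpq q0 nc; apply/eqP => /(wronskian_coprime_eq0 cpq)[dp dq]; apply: nc.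
rewrite (deriv_eq0_const dp) (deriv_eq0_const dq) polyC_eq0 in q0 *.
exists (p`_0 / q`_0); rewrite /ratf /polyF.
have -> : (p`_0)%:P = (p`_0 / q`_0)%:P * (q`_0)%:P by rewrite -polyCM divfK.
by rewrite tofracM mulfK // tofrac_eq0 polyC_eq0.
Qed.

Section SquareFibres.
Variables (R : idomainType) (p q : {poly R}).
Hypotheses (cpq : coprimep p q) (W0 : wronskian p q != 0).

Let det_neq0 (x y : R * R) : ~~ proj_eq x y -> x.1 * y.2 - x.2 * y.1 != 0.
Proof. by rewrite subr_eq0. Qed.

Lemma fibre_poly_neq0 x y : ~~ proj_eq x y -> fibre_poly p q x != 0.
Proof.
move=> /det_neq0 dxy; apply/eqP => fx0.
have /eqP := wronskian_fibre_poly p q x y.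
rewrite {1}/wronskian fx0 deriv0 !mul0r subrr eq_sym mulf_eq0 polyC_eq0.
by rewrite (negbTE dxy) (negbTE W0).
Qed.

Lemma coprimep_fibre_poly x y : ~~ proj_eq x y ->
  coprimep (fibre_poly p q x) (fibre_poly p q y).
Proof.
move=> /det_neq0 dxy; apply/coprimepP => d dx dy.
have dvdp_comb (u v : R) : d %| u%:P * fibre_poly p q y - v%:P * fibre_poly p q x.
  by rewrite dvdp_sub // dvdp_mull.
have dp : d %| p.
  rewrite -(dvdpZr _ _ dxy) -mul_polyC.
  have -> : (x.1 * y.2 - x.2 * y.1)%:P * p
            = x.1%:P * fibre_poly p q y - y.1%:P * fibre_poly p q x.
    by rewrite /fibre_poly polyCB !polyCM; ring.
  exact: dvdp_comb.
have dq : d %| q.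
  rewrite -(dvdpZr _ _ dxy) -mul_polyC.
  have -> : (x.1 * y.2 - x.2 * y.1)%:P * q
            = x.2%:P * fibre_poly p q y - y.2%:P * fibre_poly p q x.
    by rewrite /fibre_poly polyCB !polyCM; ring.
  exact: dvdp_comb.
by move/coprimepP: cpq; apply.
Qed.

Lemma dvdp_wronskian_sqr_fibre x y g : ~~ proj_eq x y ->
  fibre_poly p q x = g ^+ 2 -> g %| wronskian p q.
Proof.
move=> /det_neq0 dxy fxg; rewrite -(dvdpZr _ _ dxy) -mul_polyC.
by rewrite -wronskian_fibre_poly fxg dvdp_wronskian_sqr.
Qed.

Lemma size_wronskian_fibre x y : ~~ proj_eq x y ->
  (size (wronskian p q) + 2 <= size (fibre_poly p q x) + size (fibre_poly p q y))%N.
Proof.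
move=> xy; have /det_neq0 dxy := xy.
have yx : ~~ proj_eq y x by rewrite /proj_eq eq_sym mulrC [y.1 * _]mulrC.
rewrite -(size_Cmul _ dxy) -wronskian_fibre_poly.
exact: size_wronskian (fibre_poly_neq0 xy) (fibre_poly_neq0 yx).
Qed.

Lemma no_four_sqr_fibres (x : 'I_4 -> R * R) :
  (forall i j, i != j -> ~~ proj_eq (x i) (x j)) ->
  ~ (forall i, exists g, fibre_poly p q (x i) = g ^+ 2).
Proof.
move=> xinj /fin_all_exists[g fg].
pose k0 : 'I_4 := Ordinal (isT : 0 < 4)%N.
pose k1 : 'I_4 := Ordinal (isT : 1 < 4)%N.
pose k2 : 'I_4 := Ordinal (isT : 2 < 4)%N.
pose k3 : 'I_4 := Ordinal (isT : 3 < 4)%N.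
have g_neq0 i j : i != j -> g i != 0.
  by move=> /xinj/fibre_poly_neq0; rewrite fg; apply: contra_neq => ->; rewrite expr0n.
have cg i j : i != j -> coprimep (g i) (g j).
  by move=> /xinj/coprimep_fibre_poly; rewrite !fg coprimep_pexpl // coprimep_pexpr.
have dg i j : i != j -> g i %| wronskian p q.
  by move=> /xinj/dvdp_wronskian_sqr_fibre; apply.
have dW : g k0 * (g k1 * (g k2 * g k3)) %| wronskian p q.
  by rewrite !Gauss_dvdp ?coprimepMr ?cg ?(dg k0 k1) ?(dg k1 k2) ?(dg k2 k3) ?(dg k3 k0).
have size_g i j : i != j -> (0 < size (g i))%N.
  by move/g_neq0; rewrite size_poly_gt0.
have size_sqr_g i j : i != j -> size (g i ^+ 2) = ((size (g i)).-1 * 2).+1.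
  by move/g_neq0 => gi0; rewrite -size_exp prednK // size_poly_gt0 expf_neq0.
have := dvdp_leq W0 dW.
rewrite !size_mul ?mulf_neq0 ?(g_neq0 k0 k1) ?(g_neq0 k1 k2) ?(g_neq0 k2 k3) ?(g_neq0 k3 k0) //.
have := size_wronskian_fibre (xinj k0 k1 isT); have := size_wronskian_fibre (xinj k2 k3 isT).
rewrite !fg (size_sqr_g k0 k1) ?(size_sqr_g k1 k2) ?(size_sqr_g k2 k3) ?(size_sqr_g k3 k0) //.
have := size_g k0 k1 isT; have := size_g k1 k2 isT.
have := size_g k2 k3 isT; have := size_g k3 k0 isT.
set w := size (wronskian p q); set s0 := size (g k0); set s1 := size (g k1).
set s2 := size (g k2); set s3 := size (g k3); lia.
Qed.

Lemma sqr_fibres_le3 n (x : 'I_n -> R * R) :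
  (forall i j, i != j -> ~~ proj_eq (x i) (x j)) ->
  (forall i, exists g, fibre_poly p q (x i) = g ^+ 2) -> (n <= 3)%N.
Proof.
rewrite leqNgt => xinj sqr_x; apply/negP => n4.
apply: (no_four_sqr_fibres (x := x \o widen_ord n4)) => [i j ij|i]; last exact: sqr_x.
by apply: xinj; apply: contra ij => /eqP/(congr1 val) ij; exact/eqP/val_inj.
Qed.

End SquareFibres.

Lemma proj_eq_scale (F : fieldType) (x y : F * F) :
  (x.1 != 0) || (x.2 != 0) -> (y.1 != 0) || (y.2 != 0) -> proj_eq x y ->
  exists2 c, c != 0 & x = (c * y.1, c * y.2).
Proof.
move=> x0 y0 /eqP exy; have [y2_0|y2_neq0] := eqVneq y.2 0.
  have y1_neq0 : y.1 != 0 by move: y0; rewrite y2_0 eqxx orbF.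
  have /eqP x2_0 : x.2 == 0.
    by move/eqP: exy; rewrite y2_0 mulr0 eq_sym mulf_eq0 (negbTE y1_neq0) orbF.
  exists (x.1 / y.1); last by rewrite divfK // y2_0 mulr0 -x2_0; case: (x).
  by rewrite mulf_neq0 ?invr_eq0 //; move: x0; rewrite x2_0 eqxx orbF.
exists (x.2 / y.2); last by rewrite mulrAC -exy mulfK // divfK //; case: (x).
rewrite mulf_neq0 ?invr_eq0 //; apply: contraTneq x0 => x2_0.
by move/eqP: exy; rewrite x2_0 mul0r mulf_eq0 (negbTE y2_neq0) orbF => /eqP ->; rewrite eqxx.
Qed.

Lemma fibre_poly_scale (R : comNzRingType) (p q : {poly R}) (c : R) (x : R * R) :
  fibre_poly p q (c * x.1, c * x.2) = c%:P * fibre_poly p q x.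
Proof. by rewrite /fibre_poly !polyCM; ring. Qed.

Section ClosedFieldSquares.
Variable F : closedFieldType.
Implicit Types (c : F) (p A B P Q R : {poly F}).

Lemma closed_sqrt c : exists r : F, r ^+ 2 = c.
Proof.
have [r r2] := @solve_monicpoly F 2 (fun i => if i == 0%N then c else 0) isT.
by exists r; rewrite r2 big_ord_recr big_ord1 /= expr0 mulr1 mul0r addr0.
Qed.

Lemma polyC_mul_sqr c p g : c != 0 -> c%:P * p = g ^+ 2 -> exists P, p = P ^+ 2.
Proof.
move=> c0 cpg; have [r r2] := closed_sqrt c^-1.
exists (r%:P * g); rewrite exprMn -polyC_exp r2 -cpg mulrA -polyCM.
by rewrite mulVf // mul1r.
Qed.

Lemma coprimep_mul_sqr A B Q : coprimep A B -> A * B = Q ^+ 2 -> exists U, A = U ^+ 2.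
Proof.
have [n] := ubnP (size A); elim: n A B Q => // n IH A B Q szA cAB eAB.
have [/size1_polyC ->|A_nonconst] := leqP (size A) 1.
  by have [r r2] := closed_sqrt A`_0; exists r%:P; rewrite -polyC_exp r2.
have [z Az] := closed_rootP A (negbT (gtn_eqF A_nonconst)).
set X := 'X - z%:P.
have X0 : X != 0 by rewrite polyXsubC_eq0.
have Qz : root Q z by rewrite -(root_exp (mulrC _ _) (isT : 0 < 2)%N) -eAB rootM Az.
have [Q1 eQ] := factor_theorem Q z Qz.
have XB : coprimep (X ^+ 2) B.
  by rewrite coprimep_pexpl // coprimep_sym coprimep_XsubC (coprimep_root cAB Az).
have /dvdpP[A2 eA] : X ^+ 2 %| A.
  by rewrite -(Gauss_dvdpl _ XB) eAB eQ exprMn dvdp_mull.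
have eA2B : A2 * B = Q1 ^+ 2.
  apply: (mulIf (expf_neq0 2 X0)).
  by rewrite mulrAC -eA eAB eQ exprMn.
have cA2B : coprimep A2 B by move: cAB; rewrite eA coprimepMl => /andP[].
have szA2 : (size A2 < n)%N.
  have A20 : A2 != 0 by apply: contraTneq A_nonconst => A20; rewrite eA A20 mul0r size_poly0.
  move: szA; rewrite eA size_mul ?expf_neq0 // size_exp_XsubC. set s := size A2; lia.
have [U eU] := IH A2 B Q1 szA2 cA2B eA2B.
by exists (U * X); rewrite eA eU exprMn.
Qed.

Lemma pythagorean_poly P Q R : 2%:R != 0 :> F -> coprimep P Q ->
  P ^+ 2 = Q ^+ 2 + R ^+ 2 ->
  exists U V, P *+ 2 = U ^+ 2 + V ^+ 2 /\ Q ^+ 2 = (U * V) ^+ 2.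
Proof.
move=> two0 cPQ ePQR.
have eQ : (P - R) * (P + R) = Q ^+ 2 by rewrite -[Q ^+ 2](addrK (R ^+ 2)) -ePQR; ring.
have cPR : coprimep (P - R) (P + R).
  apply/coprimepP => d dPR dPR'.
  have dP : d %| P.
    rewrite -(dvdpZr _ _ two0) scaler_nat.
    have -> : P *+ 2 = (P - R) + (P + R) by ring.
    exact: dvdp_add.
  have dQ : d %| Q ^+ 2 by rewrite -eQ dvdp_mulr.
  by move/coprimepP: (coprimep_expr 2 cPQ); apply.
have [U eU] := coprimep_mul_sqr cPR eQ.
have [V eV] : exists V, P + R = V ^+ 2.
  by apply: (coprimep_mul_sqr (B := P - R) (Q := Q)); rewrite 1?coprimep_sym // mulrC.
exists U, V; split; first by rewrite -eU -eV; ring.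
by rewrite exprMn -eU -eV.
Qed.

Lemma proj_eq_sqr_fibre p q (x y : F * F) :
  (x.1 != 0) || (x.2 != 0) -> (y.1 != 0) || (y.2 != 0) -> proj_eq x y ->
  (exists g, fibre_poly p q x = g ^+ 2) -> exists g, fibre_poly p q y = g ^+ 2.
Proof.
move=> x0 y0 /(proj_eq_scale x0 y0)[c c0 ->].
by rewrite fibre_poly_scale => -[g]; apply: polyC_mul_sqr c0.
Qed.

Lemma pts_set_eq_sqr_fibre n (a b : 'I_n -> F) p q S s :
  (forall i, (a i != 0) || (b i != 0)) ->
  (forall i, exists g, fibre_poly p q (a i, b i) = g ^+ 2) ->
  pts_set_eq a b S -> s \in S -> (s.1 != 0) || (s.2 != 0) ->
  exists g, fibre_poly p q s = g ^+ 2.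
Proof.
move=> ab0 sqr_ab [_ /(_ s) inS] /inS[i eqi] s0.
exact: (proj_eq_sqr_fibre (x := (a i, b i)) (ab0 i) s0 eqi (sqr_ab i)).
Qed.

End ClosedFieldSquares.

Lemma ratfXn (R : idomainType) (p q : {poly R}) k :
  ratf p q ^+ k = ratf (p ^+ k) (q ^+ k).
Proof. by rewrite /ratf exprMn exprVn !tofracXn. Qed.

Lemma ratf_mull (R : idomainType) (c p q : {poly R}) :
  c != 0 -> ratf (c * p) (c * q) = ratf p q.
Proof.
by move=> c0; rewrite /ratf !tofracM -mulf_div divff ?mul1r // tofrac_eq0.
Qed.

Lemma ratf_pythagorean (F : closedFieldType) (p q : {poly F}) :
  2%:R != 0 :> F -> coprimep p q ->
  (exists P, p = P ^+ 2) -> (exists Q, q = Q ^+ 2) -> (exists R, p - q = R ^+ 2) ->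
  exists U V, ratf p q = (ratf (U ^+ 2 + V ^+ 2) (2%:R * U * V)) ^+ 2.
Proof.
move=> two0 cpq [P eP] [Q eQ] [R eR].
have cPQ : coprimep P Q by move: cpq; rewrite eP eQ coprimep_pexpl // coprimep_pexpr.
have ePQR : P ^+ 2 = Q ^+ 2 + R ^+ 2 by rewrite -eP -eQ -eR; ring.
have [U [V [eUV eQUV]]] := pythagorean_poly two0 cPQ ePQR.
exists U, V; rewrite eP eQ -eUV -[P *+ 2]mulr_natl -mulrA ratf_mull ?ratfXn -?eQUV //.
by rewrite -polyC_natr polyC_eq0.
Qed.

Theorem mainTheorem5 (C : numClosedFieldType) (p q : {poly C}) (n : nat)
    (a b : 'I_n -> C) :
  coprimep p q -> q != 0 ->
  ~ (exists c : C, ratf p q = polyF c%:P) ->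
  (size q <= size p)%N ->
  (forall i, (a i != 0) || (b i != 0)) ->
  (forall i j, i != j -> ~~ proj_eq (a i, b i) (a j, b j)) ->
  (forall i, exists pt : {poly C}, (b i)%:P * p - (a i)%:P * q = pt ^+ 2) ->
  [/\ (n = 1%N -> pts_set_eq a b [:: pt0 C] ->
        exists P : {poly C}, ratf p q = ratf (P ^+ 2) q),
      (n = 2%N -> pts_set_eq a b [:: pt0 C; ptInf C] ->
        exists P Q : {poly C}, ratf p q = ratf (P ^+ 2) (Q ^+ 2)),
      (n = 3%N -> pts_set_eq a b [:: pt0 C; ptInf C; pt1 C] ->
        exists P Q : {poly C},
          ratf p q = (ratf (P ^+ 2 + Q ^+ 2) (2%:R * P * Q)) ^+ 2)
    & ~ (4 <= n)%N].
Proof.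
move=> cpq q0 nonconst _ ab0 ab_inj sqr_ab.
have sqr_at S s := pts_set_eq_sqr_fibre (S := S) (s := s) ab0 sqr_ab.
have sqr_p S : pts_set_eq a b S -> pt0 C \in S -> exists P, p = P ^+ 2.
  move=> /sqr_at S0 /S0; rewrite oner_neq0 orbT => /(_ isT).
  by rewrite /fibre_poly /= polyC1 polyC0 mul1r mul0r subr0.
have sqr_q S : pts_set_eq a b S -> ptInf C \in S -> exists Q, q = Q ^+ 2.
  move=> /sqr_at SI /SI; rewrite oner_neq0 => /(_ isT)[g].
  rewrite /fibre_poly /= polyC1 polyC0 mul0r sub0r mul1r -mulN1r -polyCN.
  by apply: polyC_mul_sqr; rewrite oppr_eq0 oner_neq0.
have sqr_pq S : pts_set_eq a b S -> pt1 C \in S -> exists R, p - q = R ^+ 2.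
  move=> /sqr_at S1 /S1; rewrite oner_neq0 => /(_ isT).
  by rewrite /fibre_poly /= polyC1 !mul1r.
split.
- by move=> _ pts; have [P ->] := sqr_p _ pts (mem_head _ _); exists P.
- move=> _ pts; have [P ->] := sqr_p _ pts (mem_head _ _).
  have [Q ->] : exists Q, q = Q ^+ 2 by apply: sqr_q pts _; rewrite !inE eqxx orbT.
  by exists P, Q.
- move=> _ pts; apply: ratf_pythagorean => //; first by rewrite pnatr_eq0.
  + exact: sqr_p pts (mem_head _ _).
  + by apply: sqr_q pts _; rewrite !inE eqxx !orbT.
  + by apply: sqr_pq pts _; rewrite !inE eqxx !orbT.
- apply/negP; rewrite -ltnNge ltnS.
  exact: (sqr_fibres_le3 cpq (wronskian_neq0 cpq q0 nonconst)
    (x := fun i => (a i, b i)) ab_inj sqr_ab).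
Qed.
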